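(* Let $\mathsf V$ and $\mathsf W$ be cyclically reduced linear words. The function $\mathsf s_{\mathsf V,\mathsf W}:I(\mathsf V,\mathsf W)\to\{1,-1,0\}$ is constant on each equivalence class of $\mathcal R(\mathsf V,\mathsf W)$.
   Context: Fix an alphabet $\mathbb A_q=\{a_1,\dots,a_q,\bar a_1,\dots,\bar a_q\}$ with a fixed linear order and $\bar{\bar v}=v$. A linear word $\mathsf V=v_0\cdots v_{n-1}$ is a non-empty finite sequence of letters; subscripts are read modulo the length. $\bar{\mathsf V}=\bar v_{n-1}\cdots\bar v_0$. $\mathsf V$ is cyclically reduced if $v_i\ne\bar v_{i+1}$ for all $i$ (indices mod $n$). $\mathsf V_j=v_jv_{j+1}\cdots v_{n-1}v_0\cdots v_{j-1}$. For cyclically reduced $\mathsf V=v_0\cdots v_{n-1}$, $\mathsf W=w_0\cdots w_{m-1}$, $I(\mathsf V,\mathsf W)=\{(j,k):0\le j<n,\,0\le k<m\}$ (entries mod $n$, mod $m$) and $\mathcal R(\mathsf V,\mathsf W)$ is the equivalence relation generated by $(j,k)\sim(j+1,k+1)$ whenever $v_j=w_k$, and $(j+1,k)\sim(j,k+1)$ whenever $v_j=\bar w_k$. For reduced half-infinite words $\mathsf T=t_0t_1\cdots$, $\mathsf U=u_0u_1\cdots$, $\mathsf T<\mathsf U$ if $t_0<u_0$, or if for some $j\ge0$, $t_i=u_i$ for $0\le i\le j$ and $t_{j+1}$ precedes $u_{j+1}$ in the order obtained by cyclically permuting the order of $\mathbb A_q$ so that $\bar t_j$ is first. $\mathsf V^{\infty}=\mathsf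 V\mathsf V\cdots$, $\mathsf V^{-\infty}=\bar{\mathsf V}\bar{\mathsf V}\cdots$ (so $\mathsf V_i^{\pm\infty}=(\mathsf V_i)^{\pm\infty}$). A 4-tuple of half-infinite words is cyclically ordered if some cyclic permutation of it is strictly increasing. $\mathsf s_{\mathsf V,\mathsf W}(i,j)=1$ if $(\mathsf V_i^\infty,\mathsf W_j^\infty,\mathsf V_i^{-\infty},\mathsf W_j^{-\infty})$ is cyclically ordered, $-1$ if $(\mathsf V_i^\infty,\mathsf W_j^{-\infty},\mathsf V_i^{-\infty},\mathsf W_j^{\infty})$ is cyclically ordered, and $0$ otherwise. *)

From HB Require Import structures.
From mathcomp Require Import all_boot all_order all_algebra.
From Stdlib Require Import Relations ClassicalEpsilon.
Set Implicit Arguments. Unset Strict Implicit. Unset Printing Implicit Defensive.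
Import Order.TTheory GRing.Theory Num.Theory.

(* Alphabet A_q = {a_1..a_q, bar a_1..bar a_q}: letter (i, false) is a_(i+1),
   (i, true) is bar a_(i+1). *)
Definition letter (q : nat) := ('I_q * bool)%type.
Definition bar {q} (x : letter q) : letter q := (x.1, ~~ x.2).

Record lword (q : nat) := LWord { lw_hd : letter q; lw_tl : seq (letter q) }.
Definition lw_seq {q} (w : lword q) : seq (letter q) := lw_hd w :: lw_tl w.
Definition lw_len {q} (w : lword q) : nat := (size (lw_tl w)).+1.
Definition lw_at {q} (w : lword q) (j : nat) : letter q :=
  nth (lw_hd w) (lw_seq w) (j %% lw_len w).

Definition cyc_reduced {q} (w : lword q) : Prop :=
  forall i, i < lw_len w -> lw_at w i <> bar (lw_at w i.+1).

Definition hword (q : nat) := nat -> letter q.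
Definition pinf {q} (w : lword q) (i : nat) : hword q := fun k => lw_at w (i + k).
(* V_i^{-infty} = bar(V_i) bar(V_i) ... ; bar(V_i) = bar v_{i+n-1} ... bar v_i *)
Definition ninf {q} (w : lword q) (i : nat) : hword q :=
  fun k => bar (lw_at w (i + (lw_len w - 1 - k %% lw_len w))).

(* The fixed linear order on A_q is given by an injective rank r : x < y iff r x < r y.
   cprec r c x y : x precedes y in the order obtained by cyclically permuting
   the order so that c is first. *)
Definition cprec {q} (r : letter q -> nat) (c x y : letter q) : bool :=
  if (r c <= r x) == (r c <= r y) then r x < r y else r c <= r x.

Definition hlt {q} (r : letter q -> nat) (T U : hword q) : Prop :=
  r (T 0) < r (U 0) \/
  exists j, (forall i, i <= j -> T i = U i) /\ cprec r (bar (T j)) (T j.+1) (U j.+1).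

Definition cyc_ord4 {q} (r : letter q -> nat) (a b c d : hword q) : Prop :=
  (hlt r a b /\ hlt r b c /\ hlt r c d) \/
  (hlt r b c /\ hlt r c d /\ hlt r d a) \/
  (hlt r c d /\ hlt r d a /\ hlt r a b) \/
  (hlt r d a /\ hlt r a b /\ hlt r b c).

Definition sVW {q} (r : letter q -> nat) (V W : lword q) (i j : nat) : int :=
  if excluded_middle_informative
       (cyc_ord4 r (pinf V i) (pinf W j) (ninf V i) (ninf W j)) then 1%R
  else if excluded_middle_informative
       (cyc_ord4 r (pinf V i) (ninf W j) (ninf V i) (pinf W j)) then (-1)%R
  else 0%R.

Definition Iidx {q} (V W : lword q) := ('I_(lw_len V) * 'I_(lw_len W))%type.

Definition Rstep {q} (V W : lword q) (p p' : Iidx V W) : Prop :=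
  exists (j : 'I_(lw_len V)) (k : 'I_(lw_len W)),
    (lw_at V j = lw_at W k /\
     val p.1 = val j /\ val p.2 = val k /\
     val p'.1 = j.+1 %% lw_len V /\ val p'.2 = k.+1 %% lw_len W) \/
    (lw_at V j = bar (lw_at W k) /\
     val p.1 = j.+1 %% lw_len V /\ val p.2 = val k /\
     val p'.1 = val j /\ val p'.2 = k.+1 %% lw_len W).

Definition Rrel {q} (V W : lword q) : relation (Iidx V W) :=
  clos_refl_sym_trans (Iidx V W) (@Rstep q V W).
Arguments Rrel {q} V W _ _.
Arguments Rstep {q} V W _ _.
Arguments sVW {q} r V W i j.

From HB Require Import structures.
From mathcomp Require Import all_boot all_order all_algebra.
From Stdlib Require Import ClassicalEpsilon FunctionalExtensionality.
Set Implicit Arguments. Unset Strict Implicit. Unset Printing Implicit Defensive.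

(* A half-infinite reduced word is an end of the free group, and
   the letter a acts on ends by left multiplication with bar a: cancel a
   leading a, or prepend bar a otherwise ('translate a').  This action does
   not preserve the linear order 'hlt', but it changes it only by a rotation:
   there is a cut (a boolean 'side' of each word) such that the translated
   order is the old order with the two sides swapped ('rotated').  A rotation
   never changes which 4-tuples are cyclically ordered (lemma
   'cyc4_rotation'), hence translation preserves the sign 'sign4' of a
   4-tuple of ends.  Finally, for a generating step of R(V,W) the four ends
   V_i^{+-oo}, W_j^{+-oo} at one index pair are the translates by a common
   letter of the four ends at the other index pair, so s_{V,W} is constant
   along every step and therefore on every class of R(V,W). *)

(* [rotated b1 b2 N O]: on a pair whose sides are b1, b2, the relation N agrees
   with O on pairs on the same side, while across the cut the true side comes
   first for N and last for O. *)
Definition rotated (b1 b2 : bool) (N O : Prop) : Prop :=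
  if b1 == b2 then N <-> O else if b1 then N /\ ~ O else ~ N /\ O.

Lemma rotated_iff b1 b2 (N N' O O' : Prop) :
  (N <-> N') -> (O <-> O') -> rotated b1 b2 N' O' -> rotated b1 b2 N O.
Proof. by rewrite /rotated; case: b1; case: b2 => /=; tauto. Qed.

Lemma rotated_sym b1 b2 (N O : Prop) :
  rotated b1 b2 N O -> rotated (~~ b1) (~~ b2) O N.
Proof. by rewrite /rotated; case: b1; case: b2 => /=; tauto. Qed.

Definition cyc4 (X : Type) (O : X -> X -> Prop) (a b c d : X) : Prop :=
  (O a b /\ O b c /\ O c d) \/ (O b c /\ O c d /\ O d a) \/
  (O c d /\ O d a /\ O a b) \/ (O d a /\ O a b /\ O b c).

Lemma cyc4_rotation (X : Type) (O N : X -> X -> Prop) (side : X -> bool)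
    (a b c d : X) :
  rotated (side a) (side b) (N a b) (O a b) ->
  rotated (side b) (side c) (N b c) (O b c) ->
  rotated (side c) (side d) (N c d) (O c d) ->
  rotated (side d) (side a) (N d a) (O d a) ->
  (cyc4 O a b c d <-> cyc4 N a b c d).
Proof.
rewrite /rotated /cyc4.
by case: (side a); case: (side b); case: (side c); case: (side d) => /=; tauto.
Qed.

Lemma cyclic_nat_rotation (x y c : nat) :
  rotated (x < c) (y < c) (x < y)
          (if (c <= x) == (c <= y) then x < y else c <= x).
Proof.
rewrite (leqNgt c x) (leqNgt c y) /rotated.
case: (ltnP x c) => hx; case: (ltnP y c) => hy //=.
- by split=> //; exact: leq_trans hx hy.
- by split=> //; apply/negP; rewrite -leqNgt ltnW // (leq_trans hy hx).
Qed.

Definition hcons {q} (x : letter q) (X : hword q) : hword q :=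
  fun k => if k is k'.+1 then X k' else x.
Definition htail {q} (X : hword q) : hword q := fun k => X k.+1.

Lemma hcons_htail q (s : hword q) : s = hcons (s 0) (htail s).
Proof. by apply: functional_extensionality => -[|k]. Qed.

Lemma barK q (x : letter q) : bar (bar x) = x.
Proof. by case: x => a b; rewrite /bar /= negbK. Qed.

Lemma ltn_flip (x y : nat) : x != y -> (x < y) = ~~ (y < x).
Proof. by move=> h; rewrite -leqNgt ltn_neqAle h. Qed.

Lemma cprecxx q (r : letter q -> nat) c x : cprec r c x x = false.
Proof. by rewrite /cprec eqxx ltnn. Qed.

Section Comparison.
Variables (q : nat) (r : letter q -> nat).

Definition hlt_late (T U : hword q) : Prop :=
  exists j, (forall i, i <= j -> T i = U i) /\
            cprec r (bar (T j)) (T j.+1) (U j.+1).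

Lemma hlt_late_head T U : hlt_late T U -> T 0 = U 0.
Proof. by case=> j [H _]; apply: H. Qed.

Lemma hlt_diff T U : T 0 <> U 0 -> (hlt r T U <-> r (T 0) < r (U 0)).
Proof. by move=> ne; split; [case=> // /hlt_late_head | left]. Qed.

Lemma hlt_cons x T U :
  hlt r (hcons x T) (hcons x U) <-> cprec r (bar x) (T 0) (U 0) \/ hlt_late T U.
Proof.
split.
- case=> [|[[|j] [H1 H2]]]; first by rewrite /= ltnn.
  + by left.
  + by right; exists j; split => // i hi; exact: (H1 i.+1 hi).
- case=> [h|[j [H1 H2]]]; right.
  + by exists 0; split => // -[|i].
  + by exists j.+1; split => // -[|i] hi //=; exact: H1.
Qed.

Lemma hlt_cons_same x T U : T 0 = U 0 ->
  (hlt r (hcons x T) (hcons x U) <-> hlt r T U).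
Proof.
move=> e; rewrite hlt_cons e cprecxx.
by split; [case=> // h; right | case; [rewrite e ltnn | right]].
Qed.

Lemma hlt_cons_diff x T U : T 0 <> U 0 ->
  (hlt r (hcons x T) (hcons x U) <-> cprec r (bar x) (T 0) (U 0)).
Proof. by move=> ne; rewrite hlt_cons; split; [case=> // /hlt_late_head | left]. Qed.

End Comparison.

Section Translation.
Variables (q : nat) (r : letter q -> nat).
Hypothesis r_inj : injective r.

(* Left multiplication by bar a, freely reduced. *)
Definition translate (a : letter q) (s : hword q) : hword q :=
  if s 0 == a then htail s else hcons (bar a) s.

(* The cut of the rotation induced by [translate a]. *)
Definition side (a : letter q) (s : hword q) : bool :=
  if s 0 == a then r (s 1) < r (bar a) else r a < r (s 0).

(* If s starts with a, its next letter is not bar a, so that the free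
   reduction of bar a . s cancels exactly one letter (true for reduced s). *)
Definition head_reduced (a : letter q) (s : hword q) : Prop :=
  s 0 = a -> s 1 <> bar a.

Lemma translate_hit a X : translate a (hcons a X) = X.
Proof. by rewrite /translate /= eqxx. Qed.
Lemma translate_miss a s : s 0 <> a -> translate a s = hcons (bar a) s.
Proof. by rewrite /translate; case: eqP. Qed.
Lemma side_hit a X : side a (hcons a X) = (r (X 0) < r (bar a)).
Proof. by rewrite /side /= eqxx. Qed.
Lemma side_miss a s : s 0 <> a -> side a s = (r a < r (s 0)).
Proof. by rewrite /side; case: eqP. Qed.

Lemma head_reduced_hit a X : X 0 <> bar a -> head_reduced a (hcons a X).
Proof. by move=> h _. Qed.
Lemma head_reduced_miss a s : s 0 <> a -> head_reduced a s.
Proof. by move=> h /h. Qed.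

Lemma r_neq (x y : letter q) : x <> y -> r x != r y.
Proof. by move=> ne; apply/eqP => /r_inj. Qed.

Lemma rotation_hit_hit a X Y : X 0 <> bar a -> Y 0 <> bar a ->
  rotated (r (X 0) < r (bar a)) (r (Y 0) < r (bar a))
          (hlt r X Y) (hlt r (hcons a X) (hcons a Y)).
Proof.
move=> hX hY; case: (X 0 =P Y 0) => [e | ne].
- by rewrite e /rotated eqxx; exact: iff_sym (hlt_cons_same r a e).
- apply: (rotated_iff (hlt_diff r ne) (hlt_cons_diff r a ne)).
  exact: cyclic_nat_rotation.
Qed.

Lemma rotation_miss_miss a s t : s 0 <> a -> t 0 <> a ->
  rotated (r a < r (s 0)) (r a < r (t 0))
          (hlt r (hcons (bar a) s) (hcons (bar a) t)) (hlt r s t).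
Proof.
move=> hs ht; case: (s 0 =P t 0) => [e | ne].
- by rewrite e /rotated eqxx; exact: (hlt_cons_same r (bar a) e).
- apply: (rotated_iff (hlt_cons_diff r (bar a) ne) (hlt_diff r ne)).
  rewrite barK (ltn_flip (r_neq (nesym hs))) (ltn_flip (r_neq (nesym ht))).
  exact/rotated_sym/cyclic_nat_rotation.
Qed.

Lemma rotation_hit_miss a X t : X 0 <> bar a -> t 0 <> a ->
  rotated (r (X 0) < r (bar a)) (r a < r (t 0))
          (hlt r X (hcons (bar a) t)) (hlt r (hcons a X) t).
Proof.
move=> hX ht.
apply: (rotated_iff (hlt_diff r (T := X) (U := hcons _ t) hX)
                    (hlt_diff r (T := hcons a X) (U := t) (nesym ht))).
by case: (_ < _); case: (_ < _).
Qed.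

Lemma rotation_miss_hit a s Y : s 0 <> a -> Y 0 <> bar a ->
  rotated (r a < r (s 0)) (r (Y 0) < r (bar a))
          (hlt r (hcons (bar a) s) Y) (hlt r s (hcons a Y)).
Proof.
move=> hs hY.
apply: (rotated_iff (hlt_diff r (T := hcons _ s) (U := Y) (nesym hY))
                    (hlt_diff r (T := s) (U := hcons a Y) hs)).
rewrite /= (ltn_flip (r_neq (nesym hY))) (ltn_flip (r_neq hs)).
by case: (_ < _); case: (_ < _).
Qed.

Lemma translate_rotation a s t : head_reduced a s -> head_reduced a t ->
  rotated (side a s) (side a t)
          (hlt r (translate a s) (translate a t)) (hlt r s t).
Proof.
move=> gs gt.
case: (eqVneq (s 0) a) => [hs | /eqP hs]; case: (eqVneq (t 0) a) => [ht | /eqP ht].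
- rewrite (hcons_htail s) (hcons_htail t) hs ht !translate_hit !side_hit.
  by apply: rotation_hit_hit; [exact: gs | exact: gt].
- rewrite (hcons_htail s) hs translate_hit side_hit translate_miss // side_miss //.
  by apply: rotation_hit_miss => //; exact: gs.
- rewrite (hcons_htail t) ht translate_hit side_hit translate_miss // side_miss //.
  by apply: rotation_miss_hit => //; exact: gt.
- rewrite !translate_miss // !side_miss //; exact: rotation_miss_miss.
Qed.

Definition sign4 (A B C D : hword q) : int :=
  if excluded_middle_informative (cyc_ord4 r A B C D) then 1%R
  else if excluded_middle_informative (cyc_ord4 r A D C B) then (-1)%R
  else 0%R.

Lemma sign4_iff A B C D A' B' C' D' :
  (cyc_ord4 r A B C D <-> cyc_ord4 r A' B' C' D') ->
  (cyc_ord4 r A D C B <-> cyc_ord4 r A' D' C' B') ->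
  sign4 A B C D = sign4 A' B' C' D'.
Proof.
rewrite /sign4 => h1 h2.
by repeat case: excluded_middle_informative => ? /=; first [done | tauto].
Qed.

Lemma cyc_ord4_translate a s1 s2 s3 s4 :
  head_reduced a s1 -> head_reduced a s2 ->
  head_reduced a s3 -> head_reduced a s4 ->
  cyc_ord4 r s1 s2 s3 s4 <->
  cyc_ord4 r (translate a s1) (translate a s2) (translate a s3) (translate a s4).
Proof.
move=> g1 g2 g3 g4.
exact: (cyc4_rotation (O := hlt r) (N := fun s t => hlt r (translate a s) (translate a t))
  (translate_rotation g1 g2) (translate_rotation g2 g3)
  (translate_rotation g3 g4) (translate_rotation g4 g1)).
Qed.

Lemma sign4_translate a A B C D :
  head_reduced a A -> head_reduced a B -> head_reduced a C -> head_reduced a D ->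
  sign4 A B C D = sign4 (translate a A) (translate a B) (translate a C) (translate a D).
Proof.
move=> gA gB gC gD.
by apply: sign4_iff; apply: cyc_ord4_translate.
Qed.

End Translation.

Section PeriodicEnds.
Variables (q : nat) (w : lword q).

Lemma lw_at_modD i t : lw_at w (i %% lw_len w + t) = lw_at w (i + t).
Proof. by rewrite /lw_at modnDml. Qed.
Lemma lw_at_mod i : lw_at w (i %% lw_len w) = lw_at w i.
Proof. by rewrite /lw_at modn_mod. Qed.
Lemma lw_at_addn i : lw_at w (i + lw_len w) = lw_at w i.
Proof. by rewrite /lw_at modnDr. Qed.

(* V_i^{-oo} read as a backward walk along V, n - 1 positions per letter. *)
Lemma ninfE i k : ninf w i k = bar (lw_at w (i + size (lw_tl w) * k.+1)).
Proof.
rewrite /ninf /lw_at /lw_len subn1 /=; congr (bar (nth _ _ _)).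
set m := size (lw_tl w); apply/eqP; rewrite eqn_modDl.
have hk : k %% m.+1 <= m by rewrite -ltnS ltn_pmod.
rewrite -(eqn_modDr (k %% m.+1).+1) addnS subnK // modnn.
by rewrite -[(k %% m.+1).+1]addn1 addnCA modnDml addnCA addn1 addnC -mulSn modnMr.
Qed.

Lemma pinf_cons i : pinf w i = hcons (lw_at w i) (pinf w i.+1).
Proof.
by apply: functional_extensionality => -[|t]; rewrite /pinf /= ?addn0 ?addSnnS.
Qed.

Lemma ninf_cons i : ninf w i.+1 = hcons (bar (lw_at w i)) (ninf w i).
Proof.
apply: functional_extensionality => -[|t] /=; rewrite !ninfE.
  by rewrite muln1 addSnnS lw_at_addn.
rewrite -(lw_at_addn (i + _)); congr (bar (lw_at _ _)).
by rewrite /lw_len mulnS addSn addnS -addnA (addnC (size _ * _)).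
Qed.

Lemma pinf0 i : pinf w i 0 = lw_at w i.
Proof. by rewrite /pinf addn0. Qed.

Lemma pinf_mod i : pinf w (i %% lw_len w) = pinf w i.
Proof. by apply: functional_extensionality => t; rewrite /pinf lw_at_modD. Qed.
Lemma ninf_mod i : ninf w (i %% lw_len w) = ninf w i.
Proof. by apply: functional_extensionality => t; rewrite /ninf lw_at_modD. Qed.

Hypothesis w_red : cyc_reduced w.

Lemma cyc_reduced_at i : lw_at w i <> bar (lw_at w i.+1).
Proof.
have := w_red (ltn_pmod i (isT : 0 < lw_len w)).
by rewrite lw_at_mod -[(i %% _).+1]addn1 lw_at_modD addn1.
Qed.

Lemma cyc_reduced_at_succ i : lw_at w i.+1 <> bar (lw_at w i).
Proof. by move=> e; apply: (cyc_reduced_at (i := i)); rewrite e barK. Qed.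

Lemma ninf0_neq i : ninf w i 0 <> lw_at w i.
Proof.
rewrite ninfE muln1 => e; apply: (cyc_reduced_at (i := i + size (lw_tl w))).
by rewrite -addnS -[(size _).+1]/(lw_len w) lw_at_addn -e barK.
Qed.

End PeriodicEnds.

Section Steps.
Variables (q : nat) (r : letter q -> nat) (V W : lword q).
Hypotheses (r_inj : injective r) (V_red : cyc_reduced V) (W_red : cyc_reduced W).

Lemma sVWE i j :
  sVW r V W i j = sign4 r (pinf V i) (pinf W j) (ninf V i) (ninf W j).
Proof. by []. Qed.

Lemma sVW_modl i j : sVW r V W (i %% lw_len V) j = sVW r V W i j.
Proof. by rewrite !sVWE pinf_mod ninf_mod. Qed.
Lemma sVW_modr i j : sVW r V W i (j %% lw_len W) = sVW r V W i j.
Proof. by rewrite !sVWE pinf_mod ninf_mod. Qed.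

(* v_j = w_k: the ends at (j,k) are the translates by v_j of those at
   (j+1,k+1). *)
Lemma sVW_step_same j k : lw_at V j = lw_at W k ->
  sVW r V W j k = sVW r V W j.+1 k.+1.
Proof.
move=> e; rewrite !sVWE (pinf_cons V j) (pinf_cons W k) (ninf_cons V j) (ninf_cons W k) -e.
set a := lw_at V j.
have gA : pinf V j.+1 0 <> bar a by rewrite pinf0; exact: cyc_reduced_at_succ.
have gB : pinf W k.+1 0 <> bar a by rewrite /a e pinf0; exact: cyc_reduced_at_succ.
have gC : ninf V j 0 <> a by exact: ninf0_neq.
have gD : ninf W k 0 <> a by rewrite /a e; exact: ninf0_neq.
rewrite (sign4_translate r_inj (head_reduced_hit gA) (head_reduced_hit gB)
           (head_reduced_miss gC) (head_reduced_miss gD)).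
by rewrite !translate_hit (translate_miss gC) (translate_miss gD).
Qed.

(* v_j = bar w_k: the ends at (j+1,k) are the translates by w_k of those at
   (j,k+1). *)
Lemma sVW_step_bar j k : lw_at V j = bar (lw_at W k) ->
  sVW r V W j.+1 k = sVW r V W j k.+1.
Proof.
move=> e; rewrite !sVWE.
have gA : pinf V j.+1 0 <> lw_at W k.
  by rewrite pinf0 -(barK (lw_at W k)) -e; exact: cyc_reduced_at_succ.
have gC : ninf V j 0 <> bar (lw_at W k) by rewrite -e; exact: ninf0_neq.
rewrite (pinf_cons W k) (ninf_cons V j) (pinf_cons V j) (ninf_cons W k) e barK.
set a := lw_at W k.
have gB : pinf W k.+1 0 <> bar a by rewrite pinf0; exact: cyc_reduced_at_succ.
have gD : ninf W k 0 <> a by exact: ninf0_neq.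
rewrite (sign4_translate r_inj (head_reduced_miss gA) (head_reduced_hit gB)
           (head_reduced_hit gC) (head_reduced_miss gD)).
by rewrite !translate_hit (translate_miss gA) (translate_miss gD).
Qed.

Lemma sVW_Rstep (p p' : Iidx V W) : Rstep V W p p' ->
  sVW r V W p.1 p.2 = sVW r V W p'.1 p'.2.
Proof.
case: p p' => [[j Hj] [k Hk]] [[j' Hj'] [k' Hk']] [x [y [[e E] | [e E]]]];
  case: E => /= -> [-> [-> ->]].
- by rewrite sVW_modl sVW_modr; exact: sVW_step_same.
- by rewrite sVW_modl sVW_modr; exact: sVW_step_bar.
Qed.

End Steps.

Theorem lemma2p7 (q : nat) (r : letter q -> nat) (r_inj : injective r)
  (V W : lword q) :
  cyc_reduced V -> cyc_reduced W ->
  forall p p' : Iidx V W, Rrel V W p p' ->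
  sVW r V W p.1 p.2 = sVW r V W p'.1 p'.2.
Proof.
move=> V_red W_red p p'.
elim=> [x y /(sVW_Rstep r_inj V_red W_red) | x | x y _ -> | x y z _ -> _ ->] //.
Qed.
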